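(* Let $\mathcal{R}=(\mathcal{W},\mathcal{R}_1,\mathcal{R}_2)$ be a domino set with $\mathcal{W}=\{1,\dots,m\}$, and let $\mathcal{S}$ be the cyclic triomino set constructed from $\mathcal{R}$ as below (for any fixed $n\ge 2m+1$). Then the $\mathcal{S}$-cyclic triomino problem is solvable if and only if the $\mathcal{R}$-domino problem is solvable.
   Context: A domino set is $\mathcal{R}=(\mathcal{W},\mathcal{R}_1,\mathcal{R}_2)$ with $\mathcal{W}$ non-empty finite and $\mathcal{R}_1,\mathcal{R}_2\subset\mathcal{W}^2$. The $\mathcal{R}$-domino problem is solvable if there is $\mathcal{T}:\mathbb{Z}^2\to\mathcal{W}$ with $(\mathcal{T}(s),\mathcal{T}(s+e_i))\in\mathcal{R}_i$ for all $s\in\mathbb{Z}^2$, $i=1,2$, where $e_1=(1,0)$, $e_2=(0,1)$. Let $u_1=(1,0),u_2=(0,1),u_3=(-1,0),u_4=(0,-1)$, indices mod 4. Regard integers as elements of $\mathbb{Z}_n$. Let $L=\{(w,0,0): w\in\mathcal{W}\}$, $K_1=L\cup\{(0,b,a):(a,b)\in\mathcal{R}_1\}$, $K_2=L\cup\{(0,a,b):(a,b)\in\mathcal{R}_2\}$, $K_3=L\cup\{(0,a,b):(a,b)\in\mathcal{R}_1\}$, $K_4=L\cup\{(0,b,a):(a,b)\in\mathcal{R}_2\}$. Let $\mathcal{V}=\mathbb{Z}_n$, $\mathcal{S}_i=\{(a+k,b+k,c+k):(a,b,c)\in K_i, k\in\mathcal{V}\}$, $\mathcal{S}_{i+4}=\mathcal{S}_i$,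 and $\mathcal{S}=(\mathcal{V},\mathcal{S}_1,\dots,\mathcal{S}_4)$. The $\mathcal{S}$-cyclic triomino problem is solvable if there exists $\mathcal{T}:\mathbb{Z}^2\to\mathcal{V}$ with $(\mathcal{T}(s),\mathcal{T}(s+u_i),\mathcal{T}(s+u_{i+1}))\in\mathcal{S}_i$ for every $s\in\mathbb{Z}^2$ and $1\le i\le 4$. *)

From mathcomp Require Import all_boot all_order all_algebra.
Set Implicit Arguments. Unset Strict Implicit. Unset Printing Implicit Defensive.
Import GRing.Theory.
Local Open Scope ring_scope.

(* Domino set: W = {1,...,m} (as nats), R1 R2 : rel nat (only pairs in W^2 matter;
   the theorem assumes R1, R2 are subsets of W^2). *)
Definition inW (m : nat) (w : nat) : bool := (1 <= w <= m)%N.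

Definition e (i : nat) : int * int := if i == 1%N then (1, 0) else (0, 1).

Definition vadd (s t : int * int) : int * int := (s.1 + t.1, s.2 + t.2).

Definition domino_solvable (m : nat) (R1 R2 : rel nat) : Prop :=
  exists T : int * int -> nat,
    (forall s, inW m (T s)) /\
    (forall s, R1 (T s) (T (vadd s (e 1)))) /\
    (forall s, R2 (T s) (T (vadd s (e 2)))).

Definition u (i : nat) : int * int :=
  match (i %% 4)%N with
  | 1%N => (1, 0)
  | 2%N => (0, 1)
  | 3%N => (-1, 0)
  | _ => (0, -1)
  end.

(* The sets K_i (triples of naturals, later read in Z_n). *)
Definition Kset (m : nat) (R1 R2 : rel nat) (i : nat) (t : nat * nat * nat) : Prop :=
  let: (x, y, z) := t in
  (inW m x /\ y = 0%N /\ z = 0%N) \/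
  (x = 0%N /\
   match (i %% 4)%N with
   | 1%N => R1 z y
   | 2%N => R2 y z
   | 3%N => R1 y z
   | _ => R2 z y
   end).

(* S_i = {(a+k, b+k, c+k) : (a,b,c) in K_i, k in Z_n}, with V = Z_n = 'I_n;
   an integer x is regarded as the element x mod n. *)
Definition Sset (n m : nat) (R1 R2 : rel nat) (i : nat) (x y z : 'I_n) : Prop :=
  exists a b c k : nat,
    Kset m R1 R2 i (a, b, c) /\
    (x : nat) = ((a + k) %% n)%N /\ (y : nat) = ((b + k) %% n)%N /\
    (z : nat) = ((c + k) %% n)%N.

Definition cyclic_triomino_solvable (n m : nat) (R1 R2 : rel nat) : Prop :=
  exists T : int * int -> 'I_n,
    forall s (i : nat), (1 <= i <= 4)%N ->
      @Sset n m R1 R2 i (T s) (T (vadd s (u i))) (T (vadd s (u i.+1))).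

From mathcomp Require Import all_boot all_order all_algebra zify ring.
Import GRing.Theory.
Set Implicit Arguments. Unset Strict Implicit. Unset Printing Implicit Defensive.
Local Open Scope ring_scope.

(* Say that x lies above y in Z_n when x - y mod n is in W = {1, ..., m}; since
   n > 2m this relation is asymmetric.  A triomino constraint (x, y, z) in S_i
   then says either that y = z and x lies above y, or that y and z lie above x
   by heights b and c with (0, b, c) in K_i.  Consecutive constraints around a
   cell share a neighbour, which forces the same alternative in all four
   directions: every cell is a peak (above its four equal neighbours) or a
   valley, and adjacent cells are of opposite kinds.  So the peaks form a coset
   of the lattice spanned by (1, -1) and (-1, -1), and in these coordinates the
   heights of the peaks form a domino tiling: the four peaks around a valley
   are a 2x2 block of dominoes, on which the constraints of the valley are
   exactly R_1 and R_2.  Conversely, a domino tiling written on the peaks of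
   the even lattice, with all valleys at 0, is a triomino tiling. *)

Ltac pair_ring := rewrite /vadd /=; congr (_, _); ring.

Lemma vaddr0 s : vadd s (0, 0) = s.
Proof. by case: s => x y; rewrite /vadd /= !addr0. Qed.

Lemma vadd_periodic (P : int * int -> bool) (a b : int) :
  (forall s, P (vadd s (a, b)) = P s) ->
  forall (z : int) s, P (vadd s (z * a, z * b)) = P s.
Proof.
move=> Pab; elim/int_ind => [|k IH|k IH] s; first by rewrite !mul0r vaddr0.
- by rewrite -[in RHS]IH -[in RHS]Pab; congr P; pair_ring.
- by rewrite -[in RHS]IH -[in LHS]Pab; congr P; pair_ring.
Qed.

Lemma u_mod4 i : u (i %% 4) = u i.
Proof. by rewrite /u modn_mod. Qed.

Lemma uSS i : u i.+2 = (- (u i).1, - (u i).2).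
Proof.
rewrite -(u_mod4 i) -(u_mod4 i.+2) (_ : (i.+2 %% 4 = (i %% 4).+2 %% 4)%N); last by lia.
by case: (i %% 4)%N (ltn_pmod i (isT : (0 < 4)%N)) => [|[|[|[|]]]].
Qed.

Lemma vadd_uK s i : vadd (vadd s (u i)) (u i.+2) = s.
Proof. by rewrite uSS; case: s => x y; pair_ring. Qed.

Definition peak_cell (b p : int * int) : int * int := vadd b (p.1 - p.2, - p.1 - p.2).

Definition valley_cell (b p : int * int) : int * int := vadd (peak_cell b p) (u 0).

Definition block_offset (i : nat) : int * int :=
  match (i %% 4)%N with
  | 1%N => e 1
  | 2%N => (0, 0)
  | 3%N => e 2
  | _ => (1, 1)
  end.

Lemma valley_cell_nbr b p i :
  vadd (valley_cell b p) (u i) = peak_cell b (vadd p (block_offset i)).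
Proof.
rewrite /valley_cell /peak_cell /u /block_offset.
by case: (i %% 4)%N => [|[|[|[|k]]]]; pair_ring.
Qed.

Definition peak_cell_index (s : int * int) : int * int :=
  ((s.1 - s.2) %/ 2, (- s.1 - s.2) %/ 2)%Z.

Definition even_cell (s : int * int) : bool := (2 %| s.1 + s.2)%Z.

Lemma peak_cell_indexK p : peak_cell_index (peak_cell 0 p) = p.
Proof.
by case: p => x y; rewrite /peak_cell_index /peak_cell /vadd /=; congr (_, _); lia.
Qed.

Lemma even_peak_cell p : even_cell (peak_cell 0 p).
Proof. by case: p => x y; rewrite /even_cell /peak_cell /vadd /=; lia. Qed.

Lemma even_cell_nbr s i : even_cell (vadd s (u i)) = ~~ even_cell s.
Proof.
rewrite /even_cell /vadd /u; case: s => x y /=.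
by case: (i %% 4)%N => [|[|[|[|k]]]] /=; lia.
Qed.

Lemma peak_or_valley_cell s : exists p, s = peak_cell 0 p \/ s = valley_cell 0 p.
Proof.
case: s => x y; case: (boolP (even_cell (x, y))) => xy.
- exists (peak_cell_index (x, y)); left; move: xy.
  rewrite /even_cell /peak_cell_index /peak_cell /vadd /= => ?.
  by congr (_, _); lia.
- exists (peak_cell_index (x, y + 1)); right; move: xy.
  rewrite /even_cell /peak_cell_index /valley_cell /peak_cell /vadd /= => ?.
  by congr (_, _); lia.
Qed.

Section CyclicDifference.
Variable n : nat.
Implicit Types x y : 'I_n.

Definition cdiff x y : nat := ((x + (n - y)) %% n)%N.

Lemma cdiffK x y : x = ((y + cdiff x y) %% n)%N :> nat.
Proof.
have [xn yn] := (ltn_ord x, ltn_ord y).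
rewrite /cdiff modnDmr (_ : (y + (x + (n - y)) = x + n)%N); last by lia.
by rewrite modnDr modn_small.
Qed.

Lemma cdiff_eq x y w : (w < n)%N -> x = ((y + w) %% n)%N :> nat -> cdiff x y = w.
Proof.
move=> wn xE; have yn := ltn_ord y.
rewrite /cdiff xE modnDml (_ : (y + w + (n - y) = w + n)%N); last by lia.
by rewrite modnDr modn_small.
Qed.

Lemma cdiffx0 x y : y = 0%N :> nat -> cdiff x y = x.
Proof. by move=> y0; rewrite /cdiff y0 subn0 modnDr modn_small. Qed.

Lemma cdiff_sum_mod x y : ((cdiff x y + cdiff y x) %% n = 0)%N.
Proof.
have [xn yn] := (ltn_ord x, ltn_ord y).
rewrite /cdiff modnDm (_ : (x + (n - y) + (y + (n - x)) = n * 2)%N); last by lia.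
by rewrite modnMr.
Qed.

End CyclicDifference.

Definition above n m (x y : 'I_n) : bool := inW m (cdiff x y).

(* [Krel R1 R2 i b c] says that (0, b, c) is in K_i; it is Prop-valued so as to be
   convertible to the second clause of [Kset]. *)
Definition Krel (R1 R2 : rel nat) (i b c : nat) : Prop :=
  match (i %% 4)%N with
  | 1%N => R1 c b
  | 2%N => R2 b c
  | 3%N => R1 b c
  | _ => R2 c b
  end.

Lemma domino_relP (R1 R2 : rel nat) (D : int * int -> nat) :
  (forall p, R1 (D p) (D (vadd p (e 1)))) /\ (forall p, R2 (D p) (D (vadd p (e 2)))) <->
  (forall p i, (1 <= i <= 4)%N ->
     Krel R1 R2 i (D (vadd p (block_offset i))) (D (vadd p (block_offset i.+1)))).
Proof.
have e12 p : vadd (vadd p (e 1)) (e 2) = vadd p (1, 1) by pair_ring.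
have e21 p : vadd (vadd p (e 2)) (e 1) = vadd p (1, 1) by pair_ring.
split.
- move=> [D1 D2] p [|[|[|[|[|i]]]]] // _.
  + by have := D1 p; rewrite -[X in R1 (D X)]vaddr0.
  + by have := D2 p; rewrite -[X in R2 (D X)]vaddr0.
  + by have := D1 (vadd p (e 2)); rewrite e21.
  + by have := D2 (vadd p (e 1)); rewrite e12.
- move=> DK; split=> p.
  + by have : R1 (D (vadd p (0, 0))) (D (vadd p (e 1))) := DK p 1%N isT; rewrite vaddr0.
  + by have : R2 (D (vadd p (0, 0))) (D (vadd p (e 2))) := DK p 2%N isT; rewrite vaddr0.
Qed.

Lemma Sset_mod4 n m (R1 R2 : rel nat) i : @Sset n m R1 R2 (i %% 4) = @Sset n m R1 R2 i.
Proof. by rewrite /Sset /Kset modn_mod. Qed.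

Definition triomino_tiling n m (R1 R2 : rel nat) (T : int * int -> 'I_n) : Prop :=
  forall s i, Sset m R1 R2 i (T s) (T (vadd s (u i))) (T (vadd s (u i.+1))).

Lemma triomino_tiling_all_dirs n m (R1 R2 : rel nat) (T : int * int -> 'I_n) :
  (forall s i, (1 <= i <= 4)%N ->
     Sset m R1 R2 i (T s) (T (vadd s (u i))) (T (vadd s (u i.+1)))) ->
  triomino_tiling m R1 R2 T.
Proof.
move=> T14 s i; set j := ((i + 3) %% 4).+1.
have [j14 ji ji1] : [/\ (1 <= j <= 4)%N, (j %% 4 = i %% 4)%N & (j.+1 %% 4 = i.+1 %% 4)%N].
  by split; lia.
by rewrite -Sset_mod4 -u_mod4 -(u_mod4 i.+1) -ji -ji1 Sset_mod4 !u_mod4; apply: T14.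
Qed.

Section Triomino.
Variables (n m : nat) (R1 R2 : rel nat).
Hypotheses (R1W : forall a b, R1 a b -> inW m a && inW m b)
           (R2W : forall a b, R2 a b -> inW m a && inW m b)
           (n_large : (2 * m + 1 <= n)%N).

Lemma above_asym (x y : 'I_n) : above m x y -> above m y x -> False.
Proof.
rewrite /above /inW => /andP[? ?] /andP[? ?].
by have := cdiff_sum_mod x y; rewrite modn_small; lia.
Qed.

Lemma Krel_inW i b c : Krel R1 R2 i b c -> inW m b && inW m c.
Proof.
rewrite /Krel; case: (i %% 4)%N => [|[|[|[|k]]]] /= => [/R2W|/R1W|/R2W|/R1W|/R2W];
  by rewrite // andbC.
Qed.

Lemma SsetP i (x y z : 'I_n) :
  Sset m R1 R2 i x y z <->
  (y = z /\ above m x y) \/ Krel R1 R2 i (cdiff y x) (cdiff z x).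
Proof.
have inW_lt w : inW m w -> (w < n)%N by rewrite /inW; lia.
split.
- move=> [a [b [c [k [aK [xE [yE zE]]]]]]].
  case: aK => [[aW [b0 c0]] | [a0 bcR]]; subst.
  + left; split; first by apply: val_inj; rewrite /= yE zE.
    by rewrite /above (@cdiff_eq _ _ _ a) ?inW_lt // xE yE modnDml addnC.
  + have /andP[bW cW] := Krel_inW bcR.
    right; rewrite (@cdiff_eq _ _ _ b) ?(@cdiff_eq _ _ _ c) ?inW_lt //.
    * by rewrite zE xE modnDml addnC.
    * by rewrite yE xE modnDml addnC.
- case=> [[<- xyW] | bcR].
  + exists (cdiff x y), 0%N, 0%N, y; split; first by left.
    by rewrite addnC -cdiffK add0n modn_small.
  + exists 0%N, (cdiff y x), (cdiff z x), x; split; first by right.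
    by rewrite add0n modn_small // !(addnC _ x) -!cdiffK.
Qed.

Section TriominoToDomino.
Variable T : int * int -> 'I_n.
Hypothesis tilingT : triomino_tiling m R1 R2 T.

Local Notation nbr s i := (T (vadd s (u i))).

Definition peak s := above m (T s) (nbr s 0).

Definition height s := cdiff (T s) (nbr s 0).

Lemma above_nbrS s i : above m (T s) (nbr s i.+1) = above m (T s) (nbr s i).
Proof.
case/SsetP: (tilingT s i) => [[<- //] | /Krel_inW/andP[above_i above_i1]].
by apply/idP/idP => [/above_asym/(_ above_i1) | /above_asym/(_ above_i)].
Qed.

Lemma above_nbrE s i : above m (T s) (nbr s i) = peak s.
Proof. by elim: i => [|i IH] //; rewrite above_nbrS. Qed.

Lemma peak_nbr_const s i : peak s -> nbr s i = nbr s 0.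
Proof.
move=> ps; elim: i => [|i <-] //.
case/SsetP: (tilingT s i) => [[-> //] | /Krel_inW/andP[above_i _]].
by move: ps; rewrite -(above_nbrE s i) => /above_asym/(_ above_i).
Qed.

Lemma valley_Krel s i : ~~ peak s ->
  Krel R1 R2 i (cdiff (nbr s i) (T s)) (cdiff (nbr s i.+1) (T s)).
Proof.
move=> ps; case/SsetP: (tilingT s i) => [[_] | //].
by rewrite above_nbrE (negbTE ps).
Qed.

Lemma peak_nbr s i : peak (vadd s (u i)) = ~~ peak s.
Proof.
rewrite -(above_nbrE _ i.+2) vadd_uK.
case ps: (peak s) => /=.
- by apply/negP => /above_asym; apply; rewrite above_nbrE.
- by have /Krel_inW/andP[] := valley_Krel i (negbT ps).
Qed.

Lemma peak_peak_cell b p : peak b -> peak (peak_cell b p).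
Proof.
have step1 s : peak (vadd s (1, -1)) = peak s.
  by rewrite -[RHS]negbK -(peak_nbr _ 1) -(peak_nbr _ 0); congr peak; pair_ring.
have step2 s : peak (vadd s (-1, -1)) = peak s.
  by rewrite -[RHS]negbK -(peak_nbr _ 3) -(peak_nbr _ 0); congr peak; pair_ring.
have -> : peak_cell b p = vadd (vadd b (p.1 * 1, p.1 * -1)) (p.2 * -1, p.2 * -1).
  by rewrite /peak_cell; pair_ring.
by rewrite (vadd_periodic step2) (vadd_periodic step1).
Qed.

Lemma Krel_height b p i : peak b ->
  Krel R1 R2 i (height (peak_cell b (vadd p (block_offset i))))
               (height (peak_cell b (vadd p (block_offset i.+1)))).
Proof.
move=> pb; have valley : ~~ peak (valley_cell b p) by rewrite peak_nbr peak_peak_cell.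
suff nbrE j : cdiff (nbr (valley_cell b p) j) (T (valley_cell b p)) =
              height (peak_cell b (vadd p (block_offset j))).
  by rewrite -!nbrE; apply: valley_Krel.
have -> : valley_cell b p = vadd (peak_cell b (vadd p (block_offset j))) (u j.+2).
  by rewrite -valley_cell_nbr vadd_uK.
by rewrite vadd_uK /height peak_nbr_const //; apply: peak_peak_cell.
Qed.

Lemma triomino_domino : domino_solvable m R1 R2.
Proof.
have [b pb] : exists b, peak b.
  case p0: (peak 0); first by exists 0.
  by exists (vadd 0 (u 1)); rewrite peak_nbr p0.
exists (fun p => height (peak_cell b p)); split; first by move=> p; apply: peak_peak_cell.
by apply/domino_relP => p i _; apply: Krel_height.
Qed.

End TriominoToDomino.

Lemma domino_triomino : domino_solvable m R1 R2 -> cyclic_triomino_solvable n m R1 R2.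
Proof.
case=> D [DW DR]; have Dn p : (D p < n)%N by move: (DW p); rewrite /inW; lia.
have n_gt0 : (0 < n)%N by lia.
pose T s := insubd (Ordinal n_gt0) (if even_cell s then D (peak_cell_index s) else 0%N).
have T_peak_cell p : T (peak_cell 0 p) = D p :> nat.
  by rewrite val_insubd even_peak_cell peak_cell_indexK Dn.
have T_nbr p i : T (vadd (peak_cell 0 p) (u i)) = 0%N :> nat.
  by rewrite val_insubd even_cell_nbr even_peak_cell; case: ifP.
exists T => s i i14; apply/SsetP.
have [p [-> | ->]] := peak_or_valley_cell s.
- left; split; first by apply: val_inj; rewrite /= !T_nbr.
  by rewrite /above cdiffx0 ?T_nbr // T_peak_cell.
- right; rewrite !(cdiffx0 _ (T_nbr p 0)) !valley_cell_nbr !T_peak_cell.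
  exact: (proj1 (domino_relP R1 R2 D) DR p i i14).
Qed.

End Triomino.

Theorem lemma3p5 (m n : nat) (R1 R2 : rel nat) :
  (1 <= m)%N ->
  (forall a b, R1 a b -> inW m a && inW m b) ->
  (forall a b, R2 a b -> inW m a && inW m b) ->
  (2 * m + 1 <= n)%N ->
  cyclic_triomino_solvable n m R1 R2 <-> domino_solvable m R1 R2.
Proof.
move=> _ R1W R2W n_large; split; last exact: domino_triomino.
by case=> T /triomino_tiling_all_dirs; apply: triomino_domino.
Qed.
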